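(* For $n\ge1$, the expected total fringe size $E^L_n=\sum_{r\ge0}E^L_{n;r}$ of a simple two-dimensional lattice path chosen uniformly at random among the $4^n$ paths of length $n$ is \[ E^L_n=\frac{4}{3\cdot4^n}\sum_{k=1}^n\Big(2k^3\big(2-2^{-v_2(k)}\big)+k\big(2^{v_2(k)+1}-1\big)\Big)\bigg[\binom{2n-1}{n-k}-\binom{2n-1}{n-k-1}\bigg], \] where $v_2(k)$ is the largest $\nu$ such that $2^\nu$ divides $k$, and binomial coefficients with negative lower index are $0$.
   Context: A simple two-dimensional lattice path is a finite nonempty word over the steps $\{\uparrow,\rightarrow,\downarrow,\leftarrow\}$; its length $|\ell|$ is the number of steps. The reduction $\Phi_L(\ell)$ of a path $\ell$ of length $\ge2$: first, if the first step of $\ell$ is vertical, the entire path is rotated by $90^\circ$ clockwise; then, if the last step is horizontal, this last step alone is rotated by $90^\circ$ clockwise. The resulting path decomposes uniquely as $H_1V_1\cdots H_kV_k$ ($k\ge1$) with each $H_i$ a nonempty maximal run of horizontal steps and each $V_i$ a nonempty maximal run of vertical steps. Each block $H_iV_i$ is replaced by $\nearrow$, $\searrow$, $\swarrow$, $\nwarrow$ according as ($H_i$ starts with $\rightarrow$, $V_i$ with $\uparrow$), ($\rightarrow$, $\downarrow$), ($\leftarrow$, $\downarrow$), ($\leftarrow$, $\uparrow$); the diagonal path is then rotated by $45^\circ$ clockwise, giving $\Phi_L(\ell)$ of length $k$. The compactification degree $\mathrm{cdeg}(\ell)$ is the number $m\ge0$ such that $\Phi_L^m(\ell)$ is a single step.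 The size of the $r$th fringe of $\ell$ is $|\Phi_L^r(\ell)|$ if $\mathrm{cdeg}(\ell)\ge r$, and $0$ otherwise; $E^L_{n;r}$ is its expectation over uniformly random paths of length $n$. *)

From HB Require Import structures.
From mathcomp Require Import all_boot all_order all_algebra.
Set Implicit Arguments. Unset Strict Implicit. Unset Printing Implicit Defensive.
Import Order.TTheory GRing.Theory Num.Theory.

Inductive step := Up | Rt | Dn | Lt.

Definition step_code (s : step) : 'I_4 :=
  match s with Up => inord 0 | Rt => inord 1 | Dn => inord 2 | Lt => inord 3 end.
Definition step_decode (i : 'I_4) : step :=
  match val i with 0 => Up | 1 => Rt | 2 => Dn | _ => Lt end.
Lemma step_codeK : cancel step_code step_decode.
Proof. by case; rewrite /step_decode /= inordK. Qed.

HB.instance Definition _ := Equality.copy step (can_type step_codeK).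
HB.instance Definition _ := Choice.copy step (can_type step_codeK).
HB.instance Definition _ := Countable.copy step (can_type step_codeK).
HB.instance Definition _ := Finite.copy step (can_type step_codeK).

Definition horizontal (s : step) : bool :=
  match s with Rt | Lt => true | _ => false end.
Definition vertical (s : step) : bool := ~~ horizontal s.

Definition rot90 (s : step) : step :=
  match s with Up => Rt | Rt => Dn | Dn => Lt | Lt => Up end.

Inductive dstep := NE | SE | SW | NW.
Definition rot45 (d : dstep) : step :=
  match d with NE => Rt | SE => Dn | SW => Lt | NW => Up end.

(* block H V with H starting with h and V starting with v *)
Definition block_diag (h v : step) : dstep :=
  match h, v with
  | Rt, Up => NE | Rt, _ => SE
  | _, Dn => SW | _, _ => NW
  end.

(* Scan the path; state None = inside a vertical run (or at the start),
   Some h = inside a horizontal run whose first step is h.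
   At each horizontal->vertical transition the block H_i V_i is emitted. *)
Fixpoint blocks (st : option step) (s : seq step) : seq dstep :=
  match s with
  | [::] => [::]
  | x :: s' =>
    if horizontal x then
      match st with Some _ => blocks st s' | None => blocks (Some x) s' end
    else
      match st with Some h => block_diag h x :: blocks None s'
                  | None => blocks None s' end
  end.

(* the reduction Phi_L (meaningful for paths of length >= 2) *)
Definition PhiL (l : seq step) : seq step :=
  match l with
  | [::] => [::]
  | x :: t =>
    let s1 := if vertical x then map rot90 (x :: t) else x :: t in
    let s2 := match s1 with
              | [::] => [::]
              | y :: u => if horizontal (last y u)
                          then rcons (belast y u) (rot90 (last y u))
                          else y :: u
              end in
    map rot45 (blocks None s2)
  end.

(* compactification degree: the m with |Phi_L^m(l)| = 1, computed by
   iterating Phi_L while the length is >= 2 (fuel size l suffices since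
   Phi_L strictly decreases the length of paths of length >= 2). *)
Fixpoint cdeg_fuel (fuel : nat) (l : seq step) : nat :=
  if size l <= 1 then 0 else
  match fuel with 0 => 0 | f.+1 => (cdeg_fuel f (PhiL l)).+1 end.
Definition cdeg (l : seq step) : nat := cdeg_fuel (size l) l.

Definition fringe (r : nat) (l : seq step) : nat :=
  if r <= cdeg l then size (iter r PhiL l) else 0.

Definition ELnr (n r : nat) : rat :=
  (\sum_(t : n.-tuple step) (fringe r t)%:R) / (4 ^ n)%:R.

Definition v2 (k : nat) : nat := logn 2 k.

From HB Require Import structures.
From mathcomp Require Import all_boot all_order all_algebra.
From mathcomp Require Import ring zify.
Set Implicit Arguments. Unset Strict Implicit. Unset Printing Implicit Defensive.
Import Order.TTheory GRing.Theory Num.Theory.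
Local Open Scope ring_scope.

(* Summing [g (PhiL t)] over the 4^(n+2) paths [t] of length n+2 gives a sum of
   [g] over all paths of length k with multiplicities [4 * open_coef n k] that do
   not depend on [g]; hence the totals T_n of all fringe sizes over paths of length
   n obey T_(n+2) = (n+2) 4^(n+2) + 4 \sum_k open_coef n k T_k.  The ballot numbers
   B(n,k) = C(2n-1, n-k) - C(2n-1, n-k-1) turn this transfer into index doubling,
   \sum_k open_coef n k B(k,j) = B(n+2,2j), while \sum_k (2k^3 + k) B(n,k) = 3n 4^n/4.
   Hence 3 T_n = 4 \sum_k w_k B(n,k) with w_k = 2k^3 + k + [k even] 4 w_(k/2), and
   the weight in the statement solves this recursion. *)

Lemma step_decodeK : cancel step_decode step_code.
Proof.
by case=> [[|[|[|[|i]]]] Hi] //; apply: val_inj; rewrite /= inordK.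
Qed.

Lemma card_step : #|{: step}| = 4%N.
Proof.
rewrite (bij_eq_card (f := step_code)) ?card_ord //.
by exists step_decode; [apply: step_codeK | apply: step_decodeK].
Qed.

Lemma sum_ord_widen0 (R : nmodType) (F : nat -> R) n K :
  (n <= K)%N -> (forall k, (n <= k)%N -> F k = 0) ->
  \sum_(k < K) F k = \sum_(k < n) F k.
Proof.
move=> leK Fn0; rewrite [RHS](big_ord_widen _ _ leK) [RHS]big_mkcond /=.
by apply: eq_bigr => i _; case: ltnP => // /Fn0.
Qed.

Lemma sum_ord_double (R : nmodType) (F : nat -> R) N :
  \sum_(i < 2 * N) F i = \sum_(j < N) (F (2 * j)%N + F (2 * j).+1).
Proof.
elim: N => [|N IH]; first by rewrite muln0 !big_ord0.
by rewrite mulnS !big_ord_recr /= IH addrA.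
Qed.

Section PathSums.

Variable R : nmodType.

Lemma sum_step (F : step -> R) : \sum_x F x = F Up + F Rt + F Dn + F Lt.
Proof.
rewrite (reindex step_decode) /=; last first.
  by exists step_code => x _; [apply: step_decodeK | apply: step_codeK].
by rewrite !big_ord_recl big_ord0 /= addr0 !addrA.
Qed.

Lemma sum_tuple0 (F : 0.-tuple step -> R) : \sum_t F t = F [tuple].
Proof. by rewrite (big_pred1 [tuple]) // => t; rewrite [t]tuple0 /= eqxx. Qed.

Lemma sum_tupleS n (F : n.+1.-tuple step -> R) :
  \sum_t F t = \sum_x \sum_(t : n.-tuple step) F [tuple of x :: t].
Proof.
rewrite pair_bigA (reindex (fun p : step * n.-tuple step => [tuple of p.1 :: p.2])) //.
exists (fun t : n.+1.-tuple step => (thead t, [tuple of behead t])).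
  by case=> x t _; congr pair; apply: val_inj.
by move=> t _; rewrite -tuple_eta.
Qed.

Lemma sum_tuple_rev n (F : seq step -> R) :
  \sum_(t : n.-tuple step) F t = \sum_(t : n.-tuple step) F (rev t).
Proof.
apply: (reindex (fun t : n.-tuple step => [tuple of rev t])).
by exists (fun t : n.-tuple step => [tuple of rev t]) => t _; apply: val_inj; rewrite /= revK.
Qed.

Lemma sum_tupleSr n (F : seq step -> R) :
  \sum_(t : n.+1.-tuple step) F t = \sum_(t : n.-tuple step) \sum_y F (rcons t y).
Proof.
rewrite sum_tuple_rev (sum_tupleS (fun t => F (rev t))) [RHS]exchange_big /=.
apply: eq_bigr => y _; rewrite (sum_tuple_rev n (fun t => F (rcons t y))).
by apply: eq_bigr => t _; rewrite rev_cons.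
Qed.

Lemma sum_tuple_rot90 n (F : seq step -> R) :
  \sum_(t : n.-tuple step) F (map rot90 t) = \sum_(t : n.-tuple step) F t.
Proof.
symmetry; apply: (reindex_inj (h := fun t : n.-tuple step => [tuple of map rot90 t])).
by move=> s t /(congr1 val) /= /inj_map st; apply: val_inj; apply: st => -[] [].
Qed.

Lemma sum_tuple_const n (x : R) : \sum_(t : n.-tuple step) x = x *+ 4 ^ n.
Proof. by rewrite sumr_const card_tuple card_step. Qed.

End PathSums.

Lemma size_blocks (w : seq step) :
  (2 * size (blocks None w) <= size w)%N /\
  (forall h, 2 * size (blocks (Some h) w) <= (size w).+1)%N.
Proof.
elim: w => [|x w [IHN IHS]] //=.
have := IHS Rt; have := IHS Lt.
by case: x => /=; split => [|h] /=; try have := IHS h; lia.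
Qed.

Definition orient (x : step) : step -> step := if vertical x then rot90 else id.

Definition fix_last (y : step) : step := if horizontal y then rot90 y else y.

Lemma sum_tuple_orient (R : nmodType) x n (F : seq step -> R) :
  \sum_(t : n.-tuple step) F (map (orient x) t) = \sum_(t : n.-tuple step) F t.
Proof.
rewrite /orient; case: ifP => _; first exact: sum_tuple_rot90.
by apply: eq_bigr => t _; rewrite map_id.
Qed.

Lemma PhiL_cons_rcons x s y :
  PhiL (x :: rcons s y) =
  map rot45 (blocks (Some (orient x x)) (rcons (map (orient x) s) (fix_last (orient x y)))).
Proof.
rewrite /PhiL /orient /fix_last.
by case: x => /=; rewrite ?map_id ?map_rcons ?last_rcons ?belast_rcons; case: y.
Qed.

Lemma size_PhiL l : (2 <= size l)%N -> (size (PhiL l) < size l)%N.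
Proof.
case: l => [|x t] //; case/lastP: t => [|s y] // _.
have := (size_blocks (rcons (map (orient x) s) (fix_last (orient x y)))).2 (orient x x).
by rewrite PhiL_cons_rcons size_map /= !size_rcons size_map; lia.
Qed.

Lemma cdeg_fuel_le f l : (cdeg_fuel f l <= f)%N.
Proof. by elim: f l => [|f IH] l /=; case: ifP => // _; apply: IH. Qed.

Lemma cdeg_le_size l : (cdeg l <= size l)%N.
Proof. exact: cdeg_fuel_le. Qed.

Lemma cdeg_fuel_enough f f' l :
  (size l <= f.+1)%N -> (size l <= f'.+1)%N -> cdeg_fuel f l = cdeg_fuel f' l.
Proof.
elim: f f' l => [|f IH] [|f'] l /= lef lef'; case: ifP => // l_gt1; try lia.
by congr S; apply: IH; have := @size_PhiL l; lia.
Qed.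

Lemma cdeg_PhiL l : (2 <= size l)%N -> cdeg l = (cdeg (PhiL l)).+1.
Proof.
move=> l_gt1; rewrite /cdeg; have := size_PhiL l_gt1 => ltPhi.
case E: (size l) => [|m]; first lia.
rewrite /= E ifN; last lia.
by congr S; apply: cdeg_fuel_enough; lia.
Qed.

Definition total_fringe (l : seq step) : rat :=
  \sum_(r < (cdeg l).+1) (size (iter r PhiL l))%:R.

Lemma total_fringe_PhiL l :
  (2 <= size l)%N -> total_fringe l = (size l)%:R + total_fringe (PhiL l).
Proof.
move=> l_gt1; rewrite /total_fringe (cdeg_PhiL l_gt1) big_ord_recl.
by congr (_ + _); apply: eq_bigr => i _; rewrite -iterSr.
Qed.

Lemma total_fringe_step l : size l = 1%N -> total_fringe l = 1.
Proof.
move=> l1; rewrite /total_fringe /cdeg l1 /= l1.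
by rewrite big_ord_recl big_ord0 /= l1 addr0.
Qed.

Lemma sum_fringe l N : (cdeg l < N)%N ->
  \sum_(r < N) ((fringe r l)%:R : rat) = total_fringe l.
Proof.
move=> ltN; rewrite (sum_ord_widen0 (F := fun r => (fringe r l)%:R) ltN).
  by apply: eq_bigr => i _; rewrite /fringe -ltnS ltn_ord.
by move=> r ltr; rewrite /fringe leqNgt ltr.
Qed.

Definition path_sum k (g : seq step -> rat) : rat := \sum_(u : k.-tuple step) g u.

(* With the first and last steps normalised, [PhiL] reads the middle [s] of a path
   from an open horizontal run and ends on a vertical step; [closed_sum] and
   [open_sum] total [g] over such readings of middles of length [m], started with
   no open run, resp. with an open run of either direction. *)
Definition vertical_end (st : option step) (s : seq step) (g : seq step -> rat) : rat :=
  g (map rot45 (blocks st (rcons s Up))) + g (map rot45 (blocks st (rcons s Dn))).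

Definition closed_sum m g := \sum_(s : m.-tuple step) vertical_end None s g.

Definition open_sum m g :=
  \sum_(s : m.-tuple step) (vertical_end (Some Rt) s g + vertical_end (Some Lt) s g).

Lemma path_sum0 g : path_sum 0 g = g [::].
Proof. by rewrite /path_sum sum_tuple0. Qed.

Lemma path_sumS k g : path_sum k.+1 g = \sum_x path_sum k (fun u => g (x :: u)).
Proof. by rewrite /path_sum sum_tupleS. Qed.

Lemma closed_sum0 g : closed_sum 0 g = 2 * g [::].
Proof. by rewrite /closed_sum sum_tuple0 /vertical_end /=; ring. Qed.

Lemma open_sum0 g : open_sum 0 g = path_sum 1 g.
Proof. by rewrite /open_sum sum_tuple0 path_sumS sum_step !path_sum0 /vertical_end /=; ring. Qed.

Lemma closed_sumS m g : closed_sum m.+1 g = 2 * closed_sum m g + open_sum m g.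
Proof.
rewrite /closed_sum /open_sum sum_tupleS sum_step -!big_split mulr_sumr -big_split /=.
by apply: eq_bigr => t _; rewrite /vertical_end; ring.
Qed.

Lemma open_sumS m g :
  open_sum m.+1 g = 2 * open_sum m g + \sum_x closed_sum m (fun u => g (x :: u)).
Proof.
rewrite /closed_sum /open_sum sum_tupleS !sum_step -!big_split mulr_sumr -!big_split /=.
by apply: eq_bigr => t _; rewrite /vertical_end /=; ring.
Qed.

Fixpoint blocks_coef m : (nat -> rat) * (nat -> rat) :=
  if m is m'.+1 then
    let: (a, b) := blocks_coef m' in
    (fun k => 2 * a k + b k, fun k => 2 * b k + (if k is k'.+1 then a k' else 0))
  else (fun k => if k == 0%N then 2 else 0, fun k => if k == 1%N then 1 else 0).

Definition closed_coef m k := (blocks_coef m).1 k.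
Definition open_coef m k := (blocks_coef m).2 k.

Lemma closed_coefS m k : closed_coef m.+1 k = 2 * closed_coef m k + open_coef m k.
Proof. by rewrite /closed_coef /open_coef /=; case: (blocks_coef m). Qed.

Lemma open_coefS m k :
  open_coef m.+1 k = 2 * open_coef m k + (if k is k'.+1 then closed_coef m k' else 0).
Proof. by rewrite /closed_coef /open_coef /=; case: (blocks_coef m). Qed.

Lemma open_coef0 m : open_coef m 0 = 0.
Proof. by elim: m => [|m IH] //; rewrite open_coefS IH; ring. Qed.

Lemma blocks_coef_vanish m :
  (forall k, (m < k)%N -> closed_coef m k = 0) /\
  (forall k, (m.+1 < k)%N -> open_coef m k = 0).
Proof.
elim: m => [|m [IHc IHo]]; first by split => [[|k]|[|[|k]]].
split=> k lt_mk; rewrite ?closed_coefS ?open_coefS IHo; try lia.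
- by rewrite IHc; [ring | lia].
- by case: k lt_mk => [|k] lt_mk; rewrite ?IHc; [ring | ring | lia].
Qed.

Lemma closed_open_sum_coef m g :
  closed_sum m g = \sum_(k < m.+1) closed_coef m k * path_sum k g /\
  open_sum m g = \sum_(k < m.+2) open_coef m k * path_sum k g.
Proof.
elim: m g => [|m IH] g.
  rewrite closed_sum0 open_sum0 !big_ord_recl !big_ord0 path_sum0 /closed_coef /open_coef /=.
  by split; ring.
split.
  rewrite closed_sumS (IH g).1 (IH g).2 mulr_sumr.
  rewrite -(sum_ord_widen0 (F := fun k => 2 * (closed_coef m k * path_sum k g)) (leqnSn m.+1)); last first.
    by move=> k lt_mk; rewrite ((blocks_coef_vanish m).1 k lt_mk) mul0r mulr0.
  by rewrite -big_split; apply: eq_bigr => i _; rewrite closed_coefS [RHS]mulrDl mulrA.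
have shiftE (k : 'I_m.+1) :
    \sum_x closed_coef m k * path_sum k (fun u => g (x :: u)) = closed_coef m k * path_sum k.+1 g.
  by rewrite -mulr_sumr path_sumS.
rewrite open_sumS (IH g).2 mulr_sumr (eq_bigr _ (fun x _ => (IH _).1)) exchange_big /=.
rewrite (eq_bigr _ (fun k _ => shiftE k)) [RHS]big_ord_recl open_coef0 mul0r add0r.
under [RHS]eq_bigr do rewrite open_coefS mulrDl -mulrA.
rewrite big_split /= [X in X + _ = _]big_ord_recl open_coef0 mul0r mulr0 add0r.
congr (_ + _); symmetry.
  apply: (sum_ord_widen0 (F := fun i => 2 * (open_coef m i.+1 * path_sum i.+1 g))) => // k lt_mk.
  by rewrite (blocks_coef_vanish m).2 ?mul0r ?mulr0.
apply: (sum_ord_widen0 (F := fun i => closed_coef m i * path_sum i.+1 g)) => // k lt_mk.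
by rewrite (blocks_coef_vanish m).1 ?mul0r.
Qed.

Lemma sum_PhiL n (g : seq step -> rat) :
  \sum_(t : n.+2.-tuple step) g (PhiL t) =
  4 * \sum_(k < n.+2) open_coef n k * path_sum k g.
Proof.
rewrite -(closed_open_sum_coef n g).2 sum_tupleS.
under eq_bigr do rewrite (sum_tupleSr n (fun t => g (PhiL (_ :: t)))).
under eq_bigr do under eq_bigr do under eq_bigr do rewrite PhiL_cons_rcons.
have orientE x (s : n.-tuple step) :
    \sum_y g (map rot45 (blocks (Some (orient x x)) (rcons (map (orient x) s) (fix_last (orient x y)))))
    = 2 * vertical_end (Some (orient x x)) (map (orient x) s) g.
  by rewrite sum_step /vertical_end; case: x => /=; ring.
under eq_bigr do under eq_bigr do rewrite orientE.
under eq_bigr => x _ do rewrite (sum_tuple_orient x n (fun s => 2 * vertical_end _ s g)).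
rewrite sum_step /open_sum mulr_sumr -!big_split /orient /=.
by apply: eq_bigr => t _; ring.
Qed.

Definition fringe_total n := path_sum n total_fringe.

Lemma sum_ELnr n N : (n < N)%N -> \sum_(r < N) ELnr n r = fringe_total n / (4 ^ n)%:R.
Proof.
move=> lt_nN; rewrite /ELnr -mulr_suml exchange_big; congr (_ * _).
apply: eq_bigr => t _; apply: sum_fringe.
by apply: leq_ltn_trans lt_nN; rewrite -{2}(size_tuple t) cdeg_le_size.
Qed.

Lemma fringe_total0 : fringe_total 0 = 0.
Proof. by rewrite /fringe_total path_sum0 /total_fringe big_ord_recl big_ord0 addr0. Qed.

Lemma fringe_total1 : fringe_total 1 = 4.
Proof.
rewrite /fringe_total /path_sum.
under eq_bigr => t _ do rewrite total_fringe_step ?size_tuple //.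
by rewrite sum_tuple_const.
Qed.

Lemma fringe_totalSS n :
  fringe_total n.+2 =
  (n.+2)%:R * (4 ^ n.+2)%:R + 4 * \sum_(k < n.+2) open_coef n k * fringe_total k.
Proof.
rewrite /fringe_total {1}/path_sum.
under eq_bigr => t _ do rewrite total_fringe_PhiL ?size_tuple //.
by rewrite big_split /= sum_tuple_const sum_PhiL mulr_natr.
Qed.

Fixpoint ballot n : nat -> rat :=
  if n is n'.+1 then
    fun k => if k is k'.+1 then ballot n' k' + 2 * ballot n' k + ballot n' k.+1 else 0
  else fun k => (k == 0%N)%:R.

Lemma ballotS n k : ballot n.+1 k.+1 = ballot n k + 2 * ballot n k.+1 + ballot n k.+2.
Proof. by []. Qed.

Lemma ballot_n0 n : ballot n 0 = (n == 0%N)%:R.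
Proof. by case: n. Qed.

Lemma ballot_vanish n k : (n < k)%N -> ballot n k = 0.
Proof. by elim: n k => [|n IH] [|k] //= lt_nk; rewrite !IH ?addr0 ?mulr0 //; lia. Qed.

(* The values at n = 0, 1 are chosen so that [transferSS] holds for every n. *)
Definition transfer n k : rat :=
  match n with 0 => (k == 0%N)%:R | 1 => 0 | m.+2 => open_coef m k end.

Lemma transfer_n0 n : transfer n 0 = (n == 0%N)%:R.
Proof. by case: n => [|[|m]] //=; rewrite open_coef0. Qed.

(* Cayley-Hamilton for the matrix [[2, 1], [x, 2]] by which [blocks_coef] evolves,
   x shifting the index k. *)
Lemma transferSS n k :
  transfer n.+2 k.+1 = 4 * transfer n.+1 k.+1 - 4 * transfer n k.+1 + transfer n k.
Proof.
case: n => [|[|m]] /=.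
- by rewrite /open_coef /=; case: k => [|k] /=; ring.
- by rewrite /open_coef /=; case: k => [|k] /=; ring.
- by rewrite open_coefS closed_coefS open_coefS; ring.
Qed.

Lemma transfer_vanish n k : (0 < k)%N -> (n <= k)%N -> transfer n k = 0.
Proof. by case: n => [|[|m]] //=; [case: k | move=> *; apply: (blocks_coef_vanish m).2; lia]. Qed.

Definition doubling_rec (W : nat -> nat -> rat) :=
  [/\ forall n, W n 0%N = (n == 0%N)%:R, forall j, W 0%N j.+1 = 0,
      forall j, W 1%N j.+1 = 0 &
      forall n j, W n.+2 j.+1 =
        4 * W n.+1 j.+1 - 4 * W n j.+1 + (W n j + 2 * W n j.+1 + W n j.+2)].

Lemma doubling_rec_uniq W1 W2 : doubling_rec W1 -> doubling_rec W2 -> W1 =2 W2.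
Proof.
case=> [W1_0 W1_1 W1_2 W1S] [W2_0 W2_1 W2_2 W2S].
suff W12 n : W1 n =1 W2 n /\ W1 n.+1 =1 W2 n.+1 by move=> n j; apply: (W12 n).1.
elim: n => [|n [IH1 IH2]].
  by split=> [[|j]|[|j]]; rewrite ?W1_0 ?W2_0 ?W1_1 ?W2_1 ?W1_2 ?W2_2.
by split=> // [[|j]]; rewrite ?W1_0 ?W2_0 // W1S W2S !IH1 !IH2.
Qed.

Lemma doubling_rec_ballot : doubling_rec (fun n j => ballot n (2 * j)).
Proof.
split=> [n|j|j|n j]; first by rewrite muln0 ballot_n0.
- by rewrite ballot_vanish.
- by rewrite ballot_vanish //; lia.
have -> : (2 * j.+1 = (2 * j).+2)%N by lia.
have -> : (2 * j.+2 = (2 * j).+4)%N by lia.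
by rewrite !ballotS; ring.
Qed.

Lemma doubling_rec_transfer_ballot :
  doubling_rec (fun n j => \sum_(k < n.+1) transfer n k * ballot k j).
Proof.
have widenE K n j : (n < K)%N ->
    \sum_(k < n.+1) transfer n k * ballot k j = \sum_(k < K) transfer n k * ballot k j.
  move=> lt_nK; symmetry; apply: (sum_ord_widen0 (F := fun k => transfer n k * ballot k j)) => // k lt_nk.
  by rewrite transfer_vanish ?mul0r //; lia.
have shiftE K n j :
    \sum_(k < K.+1) transfer n k * ballot k j.+1 = \sum_(k < K) transfer n k.+1 * ballot k.+1 j.+1.
  by rewrite big_ord_recl /= mulr0 add0r.
split=> [n|j|j|n j].
- by rewrite big_ord_recl big1 ?addr0 ?transfer_n0 ?mulr1 // => i _; rewrite mulr0.
- by rewrite big_ord_recl big_ord0 /= mulr0 addr0.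
- by rewrite !big_ord_recl big_ord0 /= !mul0r !addr0.
have shiftedE m : (m <= n.+2)%N ->
    \sum_(k < m.+1) transfer m k * ballot k j.+1 =
    \sum_(k < n.+3) transfer m k.+1 * ballot k.+1 j.+1.
  by move=> le_mn; rewrite (widenE n.+4) -?shiftE //; lia.
have ballotE :
    \sum_(k < n.+1) transfer n k * ballot k j +
      2 * \sum_(k < n.+1) transfer n k * ballot k j.+1 +
      \sum_(k < n.+1) transfer n k * ballot k j.+2 =
    \sum_(k < n.+3) transfer n k * ballot k.+1 j.+1.
  have lt_n3 : (n < n.+3)%N by lia.
  rewrite !(widenE _ _ _ lt_n3) mulr_sumr -!big_split /=.
  by apply: eq_bigr => k _; ring.
rewrite ballotE !shiftedE; try lia.
under eq_bigr do rewrite transferSS.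
by rewrite !mulr_sumr -sumrB -!big_split; apply: eq_bigr => k _ /=; ring.
Qed.

Lemma sum_transfer_ballot n j :
  \sum_(k < n.+1) transfer n k * ballot k j = ballot n (2 * j).
Proof. exact: doubling_rec_uniq doubling_rec_transfer_ballot doubling_rec_ballot n j. Qed.

Lemma sum_ballotS (f : nat -> rat) n : f 0%N = 0 ->
  \sum_(k < n.+2) f k * ballot n.+1 k =
  \sum_(k < n.+1) (f k.+1 + 2 * f k + f k.-1) * ballot n k.
Proof.
move=> f0; have [le_n23 le_n13 lt_n3] : [/\ n.+2 <= n.+3, n.+1 <= n.+3 & n < n.+3]%N by split; lia.
rewrite -(sum_ord_widen0 (F := fun k => f k * ballot n.+1 k) le_n23); last first.
  by move=> k lt_nk; rewrite ballot_vanish ?mulr0.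
set g := fun k => f k.+1 + 2 * f k + f k.-1.
rewrite -(sum_ord_widen0 (F := fun k => g k * ballot n k) le_n13); last first.
  by move=> k lt_nk; rewrite ballot_vanish ?mulr0.
have sum1E : \sum_(k < n.+3) f k.+1 * ballot n k = \sum_(k < n.+2) f k.+1 * ballot n k.
  by rewrite big_ord_recr /= ballot_vanish // mulr0 addr0.
have sum2E : \sum_(k < n.+3) 2 * f k * ballot n k = \sum_(k < n.+2) 2 * f k.+1 * ballot n k.+1.
  by rewrite big_ord_recl /= f0 mulr0 mul0r add0r.
have sum3E : \sum_(k < n.+3) f k.-1 * ballot n k = \sum_(k < n.+2) f k.+1 * ballot n k.+2.
  rewrite big_ord_recl [X in _ + X = _]big_ord_recl /= !add0n f0 !mul0r !add0r [RHS]big_ord_recr /=.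
  rewrite (ballot_vanish lt_n3) mulr0 addr0.
  by apply: eq_bigr => i _; rewrite /bump /= !add1n.
have splitE : \sum_(k < n.+3) g k * ballot n k =
    \sum_(k < n.+3) f k.+1 * ballot n k + \sum_(k < n.+3) 2 * f k * ballot n k +
    \sum_(k < n.+3) f k.-1 * ballot n k.
  by rewrite -!big_split /=; apply: eq_bigr => k _; rewrite /g; ring.
rewrite splitE sum1E sum2E sum3E big_ord_recl ballot_n0 mulr0 add0r -!big_split /=.
by apply: eq_bigr => k _; ring.
Qed.

Lemma sum_delta0_ballot n : \sum_(k < n.+1) ((k : nat) == 0%N)%:R * ballot n k = (n == 0%N)%:R.
Proof. by rewrite big_ord_recl big1 ?mul1r ?addr0 ?ballot_n0 // => i _; rewrite mul0r. Qed.

Lemma sum_id_ballot n : 4 * \sum_(k < n.+1) k%:R * ballot n k = (4 ^ n)%:R - (n == 0%N)%:R.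
Proof.
elim: n => [|n IH]; first by rewrite big_ord_recl big_ord0 /=; ring.
have idE (k : nat) (x : rat) :
    (k.+1%:R + 2 * k%:R + k.-1%:R) * x = 4 * (k%:R * x) + (k == 0%N)%:R * x.
  by case: k => [|k] /=; rewrite ?mulrS; ring.
rewrite (sum_ballotS (f := fun k => k%:R)) //.
under eq_bigr do rewrite idE.
rewrite big_split -mulr_sumr sum_delta0_ballot mulrDr IH expnS natrM.
by case: (n == 0%N) => /=; ring.
Qed.

Definition length_weight k : rat := 2 * k%:R ^+ 3 + k%:R.

Lemma sum_length_weight_ballot n :
  4 * \sum_(k < n.+1) length_weight k * ballot n k = 3 * n%:R * (4 ^ n)%:R.
Proof.
elim: n => [|n IH]; first by rewrite big_ord_recl big_ord0 /length_weight /=; ring.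
have weightE k x : (length_weight k.+1 + 2 * length_weight k + length_weight k.-1) * x =
    4 * (length_weight k * x) + 12 * (k%:R * x) + 3 * ((k == 0%N)%:R * x).
  by case: k => [|k]; rewrite /length_weight /= ?mulrS; ring.
rewrite (sum_ballotS (f := length_weight)); last by rewrite /length_weight; ring.
under eq_bigr do rewrite weightE.
rewrite !big_split -!mulr_sumr sum_delta0_ballot.
set A := \sum_(k < n.+1) _ * _; set B := \sum_(k < n.+1) _ * _.
have -> : 4 * (4 * A + 12 * B + 3 * (n == 0%N)%:R) =
    4 * (4 * A) + 12 * (4 * B) + 12 * (n == 0%N)%:R by ring.
rewrite IH sum_id_ballot expnS natrM mulrS.
by case: (n == 0%N) => /=; ring.
Qed.

Definition binz (N : nat) (j : int) : nat := if j is Posz i then 'C(N, i) else 0.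

Lemma binz_neg N j : j < 0 -> binz N j = 0%N.
Proof. by case: j. Qed.

Lemma binzS N j : binz N.+1 j = (binz N j + binz N (j - 1))%N.
Proof.
case: j => [[|i]|i]; last by rewrite !binz_neg //; lia.
- by rewrite (@binz_neg N (Posz 0 - 1)) //= !bin0.
- by have -> : Posz i.+1 - 1 = Posz i by lia.
Qed.

Lemma ballot_binz n k :
  ballot n.+1 k = (binz n.*2.+1 (n.+1%:Z - k%:Z))%:R - (binz n.*2.+1 (n%:Z - k%:Z))%:R.
Proof.
elim: n k => [|n IH] [|k].
- by rewrite /= bin1 bin0 subrr.
- case: k => [|k]; first by rewrite /= bin0 subr0.
  by rewrite !binz_neg ?subrr //; lia.
- have -> : (n.+1.*2.+1 = n.+2 + n.+1)%N by lia.
  by rewrite /= !addn0 -(bin_sub (leq_addl n.+2 n.+1)) addnK subrr.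
rewrite ballotS !IH.
have -> : (n.+1.*2.+1 = n.*2.+1.+2)%N by lia.
set d : int := n.+1%:Z - k%:Z.
have -> : n.+2%:Z - k.+1%:Z = d by rewrite /d; lia.
have -> : n.+1%:Z - k.+1%:Z = d - 1 by rewrite /d; lia.
have -> : n.+1%:Z - k.+2%:Z = d - 1 - 1 by rewrite /d; lia.
have -> : n%:Z - k%:Z = d - 1 by rewrite /d; lia.
have -> : n%:Z - k.+1%:Z = d - 1 - 1 by rewrite /d; lia.
have -> : n%:Z - k.+2%:Z = d - 1 - 1 - 1 by rewrite /d; lia.
by rewrite !binzS !natrD; ring.
Qed.

Lemma ballot_bin n k : (0 < k)%N -> (k <= n)%N ->
  ballot n k =
  ('C(2 * n - 1, n - k))%:R - (if (k < n)%N then 'C(2 * n - 1, n - k - 1) else 0)%:R.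
Proof.
case: n => [|n] k_gt0 le_kn; first by case: k k_gt0 le_kn.
rewrite ballot_binz; have -> : (2 * n.+1 - 1 = n.*2.+1)%N by lia.
rewrite subzn //; case: ltnP => [lt_kn | le_nk].
  by have -> : n%:Z - k%:Z = Posz (n.+1 - k - 1) by lia.
by rewrite (@binz_neg _ (n%:Z - k%:Z)) //; lia.
Qed.

Definition fringe_weight (k : nat) : rat :=
  2 * (k ^ 3)%:R * (2 - ((2 ^ v2 k)%:R)^-1) + k%:R * ((2 ^ (v2 k).+1)%:R - 1).

Lemma v2_odd k : odd k -> v2 k = 0%N.
Proof. by move=> odd_k; rewrite /v2 lognE dvdn2 odd_k !andbF. Qed.

Lemma v2_double m : (0 < m)%N -> v2 (2 * m) = (v2 m).+1.
Proof. by move=> m_gt0; rewrite /v2 lognE /= muln_gt0 m_gt0 dvdn_mulr //= mulKn. Qed.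

Lemma fringe_weight_rec k :
  fringe_weight k = length_weight k + (if odd k then 0 else 4 * fringe_weight k./2).
Proof.
rewrite /fringe_weight /length_weight; case: ifP => [odd_k | even_k].
  by rewrite v2_odd // natrX; field.
case: k even_k => [|k] even_k; first by rewrite /=; field.
have [m km] : exists m, k.+1 = (2 * m)%N.
  by exists k.+1./2; have := odd_double_half k.+1; rewrite even_k -muln2 /=; lia.
have m_gt0 : (0 < m)%N by lia.
have -> : (k.+1./2 = m)%N by lia.
rewrite km v2_double // !expnS !natrM !natrX.
by field; rewrite expf_neq0.
Qed.

Lemma sum_ballot_double (f : nat -> rat) m :
  \sum_(j < m.+1) f j * ballot m (2 * j) =
  \sum_(i < m.+1) (if odd i then 0 else f i./2) * ballot m i.
Proof.
pose g i := (if odd i then 0 else f i./2) * ballot m i.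
rewrite -(sum_ord_widen0 (F := g) (n := m.+1) (K := 2 * m.+1)); first last.
- by move=> k lt_mk; rewrite /g ballot_vanish ?mulr0.
- by lia.
rewrite sum_ord_double; apply: eq_bigr => j _.
by rewrite /g mul2n oddS odd_double /= mul0r addr0 doubleK.
Qed.

Lemma sum_open_coef_ballot n j :
  \sum_(k < n.+2) open_coef n k * ballot k j = ballot n.+2 (2 * j).
Proof.
by rewrite -sum_transfer_ballot [RHS]big_ord_recr /= (blocks_coef_vanish n).2 // mul0r addr0.
Qed.

Lemma fringe_total_ballot n :
  3 * fringe_total n = 4 * \sum_(k < n.+1) fringe_weight k * ballot n k.
Proof.
elim/ltn_ind: n => -[|[|n]] IH.
- by rewrite fringe_total0 big_ord_recl big_ord0 /fringe_weight /=; ring.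
- by rewrite fringe_total1 !big_ord_recl big_ord0 /fringe_weight (@v2_odd 1) //=.
have IHw (k : 'I_n.+2) :
    3 * fringe_total k = 4 * \sum_(j < n.+3) fringe_weight j * ballot k j.
  rewrite IH ?ltn_ord //; congr (_ * _); symmetry.
  apply: (sum_ord_widen0 (F := fun j => fringe_weight j * ballot k j)) => [|j lt_kj].
    by have := ltn_ord k; lia.
  by rewrite ballot_vanish ?mulr0.
have transferE :
    \sum_(k < n.+2) open_coef n k * (3 * fringe_total k) =
    4 * \sum_(j < n.+3) fringe_weight j * ballot n.+2 (2 * j).
  under eq_bigr do rewrite IHw mulr_sumr mulr_sumr.
  rewrite exchange_big mulr_sumr; apply: eq_bigr => j _.
  by rewrite -sum_open_coef_ballot !mulr_sumr; apply: eq_bigr => k _; ring.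
have scaleE : 3 * (4 * \sum_(k < n.+2) open_coef n k * fringe_total k) =
    4 * \sum_(k < n.+2) open_coef n k * (3 * fringe_total k).
  by rewrite mulrCA mulr_sumr; congr (4 * _); apply: eq_bigr => k _; ring.
rewrite fringe_totalSS mulrDr mulrA -sum_length_weight_ballot scaleE transferE.
rewrite sum_ballot_double -mulrDr mulr_sumr -big_split; congr (4 * _).
by apply: eq_bigr => i _; rewrite [fringe_weight i]fringe_weight_rec /=; case: odd; ring.
Qed.

Theorem corollary3 (n : nat) : (1 <= n)%N ->
  exists N0 : nat, forall N : nat, (N0 <= N)%N ->
    \sum_(r < N) ELnr n r =
    4%:R / (3%:R * (4 ^ n)%:R) *
    \sum_(1 <= k < n.+1)
      ((2 * (k ^ 3)%:R * (2 - ((2 ^ v2 k)%:R)^-1) + k%:R * ((2 ^ (v2 k).+1)%:R - 1))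
       * (('C(2 * n - 1, n - k))%:R
          - (if (k < n)%N then 'C(2 * n - 1, n - k - 1) else 0)%:R)) :> rat.
Proof.
move=> n_gt0; exists n.+1 => N lt_nN.
rewrite sum_ELnr // big_add1 big_mkord.
rewrite (eq_bigr (fun k : 'I_n => fringe_weight k.+1 * ballot n k.+1)); last first.
  by move=> k _; rewrite (ballot_bin (ltn0Sn k) (ltn_ord k)).
have := fringe_total_ballot n.
rewrite big_ord_recl ballot_n0 eqn0Ngt n_gt0 mulr0 add0r => totalE.
rewrite mulrAC -totalE; field.
by rewrite pnatr_eq0 expn_eq0.
Qed.
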